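(* Let $\mathfrak s$ be a $4$-dimensional real Lie algebra admitting an abelian complex structure, and let $\mathfrak z$ be its center. Then $\mathfrak s/\mathfrak z$ is isomorphic to $\mathfrak{aff}(A)$ for some finite-dimensional real commutative associative algebra $A$ (possibly $A=0$, or with trivial multiplication).
   Context: An abelian complex structure on a real Lie algebra $\mathfrak g$ is a linear map $J$ with $J^2=-\mathrm{Id}$ and $[Jx,Jy]=[x,y]$ for all $x,y$. For a commutative associative algebra $A$, $\mathfrak{aff}(A)$ is the Lie algebra $A\oplus A$ with bracket $[(a,b),(a',b')]=(0,ab'-a'b)$. *)

From HB Require Import structures.
From mathcomp Require Import all_boot all_order all_algebra.
From mathcomp Require Import reals.
Set Implicit Arguments. Unset Strict Implicit. Unset Printing Implicit Defensive.
Import Order.TTheory GRing.Theory Num.Theory.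
Local Open Scope ring_scope.

Section Defs.
Variable R : realType.

Definition bilinear_op (n : nat) (f : 'rV[R]_n -> 'rV[R]_n -> 'rV[R]_n) : Prop :=
  (forall (a : R) x y z, f (a *: x + y) z = a *: f x z + f y z) /\
  (forall (a : R) x y z, f x (a *: y + z) = a *: f x y + f x z).

Definition is_lie_bracket (n : nat) (br : 'rV[R]_n -> 'rV[R]_n -> 'rV[R]_n) : Prop :=
  bilinear_op br /\
  (forall x, br x x = 0) /\
  (forall x y z, br x (br y z) + br y (br z x) + br z (br x y) = 0).

Definition abelian_complex_structure (n : nat)
    (br : 'rV[R]_n -> 'rV[R]_n -> 'rV[R]_n) (J : 'M[R]_n) : Prop :=
  J *m J = - 1%:M /\ (forall x y, br (x *m J) (y *m J) = br x y).

Definition lie_center (n : nat) (br : 'rV[R]_n -> 'rV[R]_n -> 'rV[R]_n)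
    (x : 'rV[R]_n) : Prop := forall y, br x y = 0.

Definition comm_assoc_algebra (m : nat) (mul : 'rV[R]_m -> 'rV[R]_m -> 'rV[R]_m)
    : Prop :=
  bilinear_op mul /\ (forall a b, mul a b = mul b a) /\
  (forall a b c, mul a (mul b c) = mul (mul a b) c).

(* bracket of aff(A) = A (+) A : [(a,b),(a',b')] = (0, ab' - a'b) *)
Definition aff_bracket (m : nat) (mul : 'rV[R]_m -> 'rV[R]_m -> 'rV[R]_m)
    (p q : 'rV[R]_m * 'rV[R]_m) : 'rV[R]_m * 'rV[R]_m :=
  (0, mul p.1 q.2 - mul q.1 p.2).

Definition linear_to_pair (n m : nat) (phi : 'rV[R]_n -> 'rV[R]_m * 'rV[R]_m)
    : Prop :=
  forall (a : R) x y,
    phi (a *: x + y) = (a *: (phi x).1 + (phi y).1, a *: (phi x).2 + (phi y).2).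

(* s / z(s) is isomorphic to aff(A): equivalently (first isomorphism theorem)
   there is a surjective Lie algebra morphism s -> aff(A) with kernel z(s). *)
Definition quotient_by_center_iso_aff (n : nat)
    (br : 'rV[R]_n -> 'rV[R]_n -> 'rV[R]_n) (m : nat)
    (mul : 'rV[R]_m -> 'rV[R]_m -> 'rV[R]_m) : Prop :=
  exists phi : 'rV[R]_n -> 'rV[R]_m * 'rV[R]_m,
    [/\ linear_to_pair phi,
        (forall p, exists x, phi x = p),
        (forall x, phi x = (0, 0) <-> lie_center br x) &
        (forall x y, phi (br x y) = aff_bracket mul (phi x) (phi y))].

End Defs.

(* The complexification of s is the sum of the abelian subalgebras
   s^{1,0} = {x - iJx} and s^{0,1} = {x + iJx}, so by Ito's argument the
   derived algebra [s,s] is abelian.  Next, s/z is isomorphic to aff(A) as soon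
   as s = W + U + z with W, U abelian, [s,s] inside U + z, and an identification
   W = U = A for which a * b := [w_a, u_b] (mod z) is symmetric: the Jacobi
   identity then makes this product associative.  In dimension four such a
   decomposition always exists.  If s is abelian, A = 0.  If z <> 0, then z is
   J-stable of dimension 2 and U is a line (A = R).  If z = 0 and there are
   brackets u, v with v outside the J-line Ru + RJu, take U = Ru + Rv and
   W = JU.  Otherwise [s,s] lies in the J-line U = Ru + RJu, which is then
   abelian; ad x acts on U as a nonzero complex scalar, and W is spanned by an
   element f acting as the identity on U and by -Jf (A = C). *)

From mathcomp Require Import all_boot all_order all_algebra.
From mathcomp Require Import boolp reals ring lra.
Set Implicit Arguments. Unset Strict Implicit. Unset Printing Implicit Defensive.
Import Order.TTheory GRing.Theory Num.Theory.
Local Open Scope ring_scope.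

Ltac vec_ring := apply/rowP => i; rewrite !mxE; ring.

(** * Sums of two abelian subsets of a Lie ring *)

Section AbelianSum.
Variables (L : zmodType) (br : L -> L -> L) (A B : L -> Prop).
Hypotheses (brDl : forall x y z, br (x + y) z = br x z + br y z)
  (brDr : forall x y z, br x (y + z) = br x y + br x z)
  (brC : forall x y, br x y = - br y x)
  (jacobi : forall x y z, br x (br y z) = br (br x y) z + br y (br x z)).
Hypotheses (abelA : forall a a', A a -> A a' -> br a a' = 0)
  (abelB : forall b b', B b -> B b' -> br b b' = 0)
  (sumAB : forall x, exists a b, [/\ A a, B b & x = a + b]).

Let br0r x : br x 0 = 0.
Proof. by apply/(addrI (br x 0)); rewrite -brDr !addr0. Qed.

Let brNr x y : br x (- y) = - br x y.
Proof. by apply/eqP; rewrite -addr_eq0 -brDr addNr br0r. Qed.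

Let brBl x y z : br (x - y) z = br x z - br y z.
Proof. by rewrite brC brDr brNr opprD opprK -!brC. Qed.

Let brBr x y z : br x (y - z) = br x y - br x z.
Proof. by rewrite brDr brNr. Qed.

Let brAB_A a b a' : A a -> A a' -> br (br a b) a' = br a (br b a').
Proof. by move=> Aa Aa'; rewrite [RHS]jacobi (abelA Aa Aa') br0r addr0. Qed.

Let brAB_B a b b' : B b -> B b' -> br (br a b) b' = br (br a b') b.
Proof.
move=> Bb Bb'; have := jacobi a b b'; rewrite (abelB Bb Bb') br0r => /eqP.
by rewrite eq_sym addr_eq0 => /eqP ->; rewrite -brC.
Qed.

Let brAB_AB a b a' b' : A a -> A a' -> B b -> B b' ->
  br (br a b) (br a' b') = 0.
Proof.
move=> Aa Aa' Bb Bb'.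
have [a1 [b1 [Aa1 Bb1 e1]]] := sumAB (br b a').
have [a2 [b2 [Aa2 Bb2 e2]]] := sumAB (br a b').
have E1 : br (br a b) a' = br a b1 by rewrite brAB_A // e1 brDr abelA // add0r.
have E2 : br (br a b) b' = br a2 b by rewrite brAB_B // e2 brDl (abelB Bb2) // addr0.
have E3 : br (br a b1) b' = br a2 b1 by rewrite brAB_B // e2 brDl (abelB Bb2) // addr0.
have E4 : br a' (br a2 b) = - br a2 b1.
  by rewrite brC brAB_A // e1 brDr abelA // add0r.
by rewrite jacobi E1 E2 E3 E4 addrN.
Qed.

Lemma metabelian_of_abelian_sum x y z w : br (br x y) (br z w) = 0.
Proof.
have brAB u v : exists a a' b b', [/\ A a, A a', B b, B b' & br u v = br a b - br a' b'].
  have [a [b [Aa Bb ->]]] := sumAB u; have [a' [b' [Aa' Bb' ->]]] := sumAB v.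
  exists a, a', b', b; split => //.
  by rewrite brDl !brDr (abelA Aa Aa') (abelB Bb Bb') [br b a']brC add0r addr0.
have [a [a' [b [b' [Aa Aa' Bb Bb' ->]]]]] := brAB x y.
have [c [c' [d [d' [Ac Ac' Bd Bd' ->]]]]] := brAB z w.
by rewrite brBl !brBr !brAB_AB // subrr.
Qed.

End AbelianSum.

(** * Quotients by the center of the form aff(A) *)

Definition quotient_by_center_is_aff (R : realType) (n : nat)
    (br : 'rV[R]_n -> 'rV[R]_n -> 'rV[R]_n) : Prop :=
  exists (m : nat) (mul : 'rV[R]_m -> 'rV[R]_m -> 'rV[R]_m),
    comm_assoc_algebra mul /\ quotient_by_center_iso_aff br mul.

Section LieAlgebra.
Variables (R : realType) (n : nat) (br : 'rV[R]_n -> 'rV[R]_n -> 'rV[R]_n).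
Hypothesis Hl : is_lie_bracket br.
Local Notation V := 'rV[R]_n.
Local Notation central := (lie_center br).

Lemma brDl x y z : br (x + y) z = br x z + br y z.
Proof. by have [[H _] _] := Hl; have := H 1 x y z; rewrite !scale1r. Qed.

Lemma brDr x y z : br x (y + z) = br x y + br x z.
Proof. by have [[_ H] _] := Hl; have := H 1 x y z; rewrite !scale1r. Qed.

Lemma br0l z : br 0 z = 0.
Proof. by apply/(addrI (br 0 z)); rewrite -brDl !addr0. Qed.

Lemma br0r z : br z 0 = 0.
Proof. by apply/(addrI (br z 0)); rewrite -brDr !addr0. Qed.

Lemma brZl a x z : br (a *: x) z = a *: br x z.
Proof. by have [[H _] _] := Hl; rewrite -[a *: x]addr0 H br0l addr0. Qed.

Lemma brZr a x z : br z (a *: x) = a *: br z x.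
Proof. by have [[_ H] _] := Hl; rewrite -[a *: x]addr0 H br0r addr0. Qed.

Lemma brNl x z : br (- x) z = - br x z.
Proof. by rewrite -scaleN1r brZl scaleN1r. Qed.

Lemma brNr x z : br z (- x) = - br z x.
Proof. by rewrite -scaleN1r brZr scaleN1r. Qed.

Lemma brBl x y z : br (x - y) z = br x z - br y z.
Proof. by rewrite brDl brNl. Qed.

Lemma brxx x : br x x = 0.
Proof. by case: Hl => _ []. Qed.

Lemma brC x y : br x y = - br y x.
Proof.
apply/eqP; rewrite -addr_eq0.
by have := brxx (x + y); rewrite brDl !brDr !brxx add0r addr0 => ->.
Qed.

Lemma jacobi x y z : br x (br y z) = br (br x y) z + br y (br x z).
Proof.
have [_ [_ /(_ x y z)]] := Hl.
rewrite [br z (br x y)]brC [br z x]brC brNr => /eqP.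
by rewrite -addrA addr_eq0 => /eqP ->; rewrite opprD !opprK addrC.
Qed.

Lemma center0 : central 0.
Proof. exact: br0l. Qed.

Lemma centerD x y : central x -> central y -> central (x + y).
Proof. by move=> cx cy z; rewrite brDl cx cy addr0. Qed.

Lemma centerZ a x : central x -> central (a *: x).
Proof. by move=> cx z; rewrite brZl cx scaler0. Qed.

Lemma centerN x : central x -> central (- x).
Proof. by move=> cx; rewrite -scaleN1r; apply: centerZ. Qed.

Lemma centerB x y : central x -> central y -> central (x - y).
Proof. by move=> cx cy; apply: centerD => //; apply: centerN. Qed.

Lemma center_subr_eq x y : x = y -> central (x - y).
Proof. by move->; rewrite subrr; apply: center0. Qed.

Lemma br_center_r x z : central z -> br x z = 0.
Proof. by move=> cz; rewrite brC cz oppr0. Qed.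

Lemma br_mod_center x x' y y' : central (x - x') -> central (y - y') -> br x y = br x' y'.
Proof.
move=> cx cy; rewrite -[x](subrK x') -[y](subrK y') brDl cx add0r brDr.
by rewrite br_center_r // add0r.
Qed.

(* [a *m F] and [b *m E] parametrize the subspaces W and U; [aff_coord x] is the
   pair (a, b) with x = a *m F + b *m E modulo the center. *)
Section AffDecomposition.
Variables (m : nat) (E F : 'M[R]_(m, n)).
Local Notation emb a b := (a *m F + b *m E).
Hypothesis span : forall x, exists a b, central (x - emb a b).
Hypothesis indep : forall a b, central (emb a b) -> a = 0 /\ b = 0.

Lemma emb_linear k (a b a' b' : 'rV[R]_m) :
  emb (k *: a + a') (k *: b + b') = k *: emb a b + emb a' b'.
Proof. by rewrite !mulmxDl -!scalemxAl scalerDr addrACA. Qed.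

Lemma emb_uniq x (a b a' b' : 'rV[R]_m) :
  central (x - emb a b) -> central (x - emb a' b') -> a = a' /\ b = b'.
Proof.
move=> cx cx'; have := centerB cx' cx.
rewrite opprB addrC subrKA addrC -scaleN1r -emb_linear !scaleN1r.
by case/indep => /eqP + /eqP; rewrite !(addrC (- _)) !subr_eq0 => /eqP -> /eqP ->.
Qed.

Lemma aff_coord_subproof x : exists p : 'rV_m * 'rV_m, central (x - emb p.1 p.2).
Proof. by have [a [b cx]] := span x; exists (a, b). Qed.

Definition aff_coord x := proj1_sig (cid (aff_coord_subproof x)).

Lemma aff_coordP x : central (x - emb (aff_coord x).1 (aff_coord x).2).
Proof. by rewrite /aff_coord; case: cid. Qed.

Lemma aff_coord_eq x (a b : 'rV[R]_m) : central (x - emb a b) -> aff_coord x = (a, b).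
Proof. by move=> cx; have [<- <-] := emb_uniq (aff_coordP x) cx; case: (aff_coord x). Qed.

Lemma aff_coord_emb (a b : 'rV[R]_m) : aff_coord (emb a b) = (a, b).
Proof. by apply: aff_coord_eq; rewrite subrr; apply: center0. Qed.

Lemma aff_coord_linear : linear_to_pair aff_coord.
Proof.
move=> k x y; apply: aff_coord_eq.
rewrite emb_linear opprD addrACA -scalerBr.
by apply: centerD; [apply: centerZ|]; apply: aff_coordP.
Qed.

Lemma aff_coordB x y :
  aff_coord (x - y) = ((aff_coord x).1 - (aff_coord y).1, (aff_coord x).2 - (aff_coord y).2).
Proof. by rewrite -scaleN1r addrC aff_coord_linear !scaleN1r !(addrC (- _)). Qed.

Hypothesis abelE : forall a b, br (a *m E) (b *m E) = 0.
Hypothesis abelF : forall a b, br (a *m F) (b *m F) = 0.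
Hypothesis symFE : forall a b, br (a *m F) (b *m E) = br (b *m F) (a *m E).
Hypothesis derived : forall x y, exists c, central (br x y - c *m E).

Definition aff_mul (a b : 'rV[R]_m) := (aff_coord (br (a *m F) (b *m E))).2.

Lemma aff_coord_brFE a b : aff_coord (br (a *m F) (b *m E)) = (0, aff_mul a b).
Proof.
have [c cc] := derived (a *m F) (b *m E); rewrite /aff_mul.
suff -> : aff_coord (br (a *m F) (b *m E)) = (0, c) by [].
by apply: aff_coord_eq; rewrite mul0mx add0r.
Qed.

Lemma brFE_mod_center a b : central (br (a *m F) (b *m E) - aff_mul a b *m E).
Proof. by have := aff_coordP (br (a *m F) (b *m E)); rewrite aff_coord_brFE mul0mx add0r. Qed.

Lemma aff_coord_br x y :
  aff_coord (br x y) = aff_bracket aff_mul (aff_coord x) (aff_coord y).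
Proof.
have := aff_coordP x; have := aff_coordP y.
move: (aff_coord x) (aff_coord y) => [a b] [a' b'] /= cy cx.
rewrite (br_mod_center cx cy) brDl !brDr abelF abelE add0r addr0 [br (b *m E) _]brC.
by rewrite aff_coordB !aff_coord_brFE /= subrr.
Qed.

Lemma aff_mul_comm_assoc : comm_assoc_algebra aff_mul.
Proof.
have mulC a b : aff_mul a b = aff_mul b a by rewrite /aff_mul symFE.
have mul_brE a b c :
    aff_mul a (aff_mul b c) = (aff_coord (br (a *m F) (br (b *m F) (c *m E)))).2.
  rewrite /aff_mul; congr (aff_coord _).2; apply: br_mod_center.
    by rewrite subrr; apply: center0.
  by rewrite -opprB; apply/centerN/brFE_mod_center.
have mulCA a b c : aff_mul a (aff_mul b c) = aff_mul b (aff_mul a c).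
  by rewrite !mul_brE jacobi abelF br0l add0r.
split; [split|split] => //.
- by move=> k a b c; rewrite /aff_mul mulmxDl -scalemxAl brDl brZl aff_coord_linear.
- by move=> k a b c; rewrite /aff_mul mulmxDl -scalemxAl brDr brZr aff_coord_linear.
- by move=> a b c; rewrite [RHS]mulC [RHS]mulCA (mulC c b).
Qed.

Theorem aff_decomposition : quotient_by_center_is_aff br.
Proof.
exists m, aff_mul; split; first exact: aff_mul_comm_assoc.
exists aff_coord; split.
- exact: aff_coord_linear.
- by case=> a b; exists (emb a b); rewrite aff_coord_emb.
- move=> x; split => [cx0 | cx]; last first.
    by apply: aff_coord_eq; rewrite !mul0mx addr0 subr0.
  by have := aff_coordP x; rewrite cx0 /= !mul0mx addr0 subr0.
- exact: aff_coord_br.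
Qed.

End AffDecomposition.

(** * Abelian complex structures *)

Definition complexified_br (p q : V * V) : V * V :=
  (br p.1 q.1 - br p.2 q.2, br p.1 q.2 + br p.2 q.1).
Local Notation cbr := complexified_br.

Lemma cbrDl p q r : cbr (p + q) r = cbr p r + cbr q r.
Proof. by congr (_, _); rewrite /= !brDl ?opprD addrACA. Qed.

Lemma cbrDr p q r : cbr p (q + r) = cbr p q + cbr p r.
Proof. by congr (_, _); rewrite /= !brDr ?opprD addrACA. Qed.

Lemma cbrC p q : cbr p q = - cbr q p.
Proof.
by congr (_, _); rewrite /= (brC p.1) (brC p.2) ?opprK ?opprB ?opprD addrC.
Qed.

Lemma cbr_jacobi p q r : cbr p (cbr q r) = cbr (cbr p q) r + cbr q (cbr p r).
Proof.
case: p q r => [x1 x2] [y1 y2] [z1 z2]; congr (_, _);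
rewrite /= !(brDl, brDr, brNl, brNr) ?(jacobi x1 y1 z1, jacobi x1 y1 z2, jacobi x1 y2 z1,
  jacobi x1 y2 z2, jacobi x2 y1 z1, jacobi x2 y1 z2, jacobi x2 y2 z1, jacobi x2 y2 z2);
by vec_ring.
Qed.

Section AbelianComplexStructure.
Variable J : 'M[R]_n.
Hypothesis HJ : abelian_complex_structure br J.

Lemma mulmxJJ (x : V) : x *m J *m J = - x.
Proof. by have [JJ _] := HJ; rewrite -mulmxA JJ mulmxN mulmx1. Qed.

Lemma brJJ x y : br (x *m J) (y *m J) = br x y.
Proof. by have [_ ->] := HJ. Qed.

Lemma brJl x y : br (x *m J) y = - br x (y *m J).
Proof. by rewrite -brJJ mulmxJJ brNl. Qed.

Lemma brJC x y : br (x *m J) y = br (y *m J) x.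
Proof. by rewrite brJl brC opprK. Qed.

Lemma brJr x y : br x (y *m J) = br y (x *m J).
Proof. by rewrite brC brJC -brC. Qed.

Lemma centerJ x : central x -> central (x *m J).
Proof. by move=> cx y; rewrite brJl cx oppr0. Qed.

Theorem derived_abelian x y z w : br (br x y) (br z w) = 0.
Proof.
(* pairs (p, q) stand for p + iq; A = {x - iJx} and B = {y + iJy} *)
pose A (c : V * V) := exists x, c = (x, - (x *m J)).
pose B (c : V * V) := exists y, c = (y, y *m J).
have abelA a a' : A a -> A a' -> cbr a a' = 0.
  move=> [x1 ->] [x2 ->]; congr (_, _) => /=.
    by rewrite brNl brNr opprK brJJ subrr.
  by rewrite brNr brNl brJl opprK addNr.
have abelB b b' : B b -> B b' -> cbr b b' = 0.
  by move=> [y1 ->] [y2 ->]; congr (_, _) => /=; rewrite ?brJJ ?subrr // brJl addrN.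
have sumAB c : exists a b, [/\ A a, B b & c = a + b].
  exists (2^-1 *: (c.1 + c.2 *m J), - (2^-1 *: (c.1 + c.2 *m J) *m J)).
  exists (2^-1 *: (c.1 - c.2 *m J), 2^-1 *: (c.1 - c.2 *m J) *m J).
  split; [by eexists | by eexists |].
  case: c => c1 c2; congr (_, _) => /=;
    rewrite -?scalemxAl ?(mulmxDl, mulNmx) ?mulmxJJ; move: (c2 *m J) => c2J;
    by apply/rowP => k; rewrite !mxE; lra.
have := metabelian_of_abelian_sum cbrDl cbrDr cbrC cbr_jacobi abelA abelB sumAB
  (x, 0) (y, 0) (z, 0) (w, 0).
by rewrite /cbr /= !(br0l, br0r, subr0, addr0) => /(congr1 fst).
Qed.

Corollary aff_decomposition_J m (E : 'M[R]_(m, n)) :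
  (forall x, exists a b, central (x - (a *m (E *m J) + b *m E))) ->
  (forall a b, central (a *m (E *m J) + b *m E) -> a = 0 /\ b = 0) ->
  (forall a b, br (a *m E) (b *m E) = 0) ->
  (forall x y, exists c, central (br x y - c *m E)) ->
  quotient_by_center_is_aff br.
Proof.
move=> span indep abelE derived; apply: (aff_decomposition span indep) => // a b.
  by rewrite !mulmxA brJJ.
by rewrite !mulmxA brJC.
Qed.

Definition J_subspace (S : V -> Prop) := [/\ forall u v, S u -> S v -> S (u + v),
  forall a u, S u -> S (a *: u) & forall u, S u -> S (u *m J)].

Definition Jline (u t : V) := exists a b, t = a *: u + b *: (u *m J).

Lemma J_subspace_center : J_subspace central.
Proof. by split; [exact: centerD | exact: centerZ | exact: centerJ]. Qed.

Lemma J_subspace0 : J_subspace (eq^~ 0).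
Proof. by split => [u v -> -> | a u -> | u ->]; rewrite ?addr0 ?scaler0 ?mul0mx. Qed.

Lemma J_subspace_Jline u : J_subspace (Jline u).
Proof.
split.
- by move=> _ _ [a [b ->]] [c [d ->]]; exists (a + c), (b + d); rewrite !scalerDl addrACA.
- by move=> k _ [a [b ->]]; exists (k * a), (k * b); rewrite scalerDr !scalerA.
- move=> _ [a [b ->]]; exists (- b), a.
  by rewrite mulmxDl -!scalemxAl mulmxJJ scalerN scaleNr addrC.
Qed.

Lemma Jline_self u : Jline u u.
Proof. by exists 1, 0; rewrite scale1r scale0r addr0. Qed.

Lemma J_pair_coef0 S w a b : J_subspace S -> ~ S w ->
  S (a *: w + b *: (w *m J)) -> a = 0 /\ b = 0.
Proof.
move=> [SD SZ SJ] Sw Sab.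
have Sw2 : S ((a ^+ 2 + b ^+ 2) *: w).
  set s := a *: w + b *: (w *m J) in Sab.
  have -> : (a ^+ 2 + b ^+ 2) *: w = a *: s + (- b) *: (s *m J).
    by rewrite /s mulmxDl -!scalemxAl mulmxJJ; move: (w *m J) => wJ; vec_ring.
  by apply: SD; apply: SZ => //; apply: SJ.
have : a ^+ 2 + b ^+ 2 = 0.
  apply: contra_notP Sw => /eqP nz.
  by rewrite -(scalerK nz w); apply: SZ.
by move=> h; split; nra.
Qed.

Lemma Jbasis_free S v w c0 c1 c2 c3 : J_subspace S -> S v -> v != 0 -> ~ S w ->
  c0 *: v + c1 *: (v *m J) + c2 *: w + c3 *: (w *m J) = 0 ->
  [/\ c0 = 0, c1 = 0, c2 = 0 & c3 = 0].
Proof.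
move=> HS Sv /eqP v0 Sw; rewrite -addrA addrC => /eqP; rewrite addr_eq0 => /eqP e.
have [c2E c3E] : c2 = 0 /\ c3 = 0.
  apply: (J_pair_coef0 HS Sw); rewrite e -scaleN1r.
  have [SD SZ SJ] := HS.
  by apply: (SZ); apply: SD; apply: SZ => //; apply: SJ.
move: e; rewrite c2E c3E !scale0r addr0 => /eqP; rewrite eq_sym oppr_eq0.
move=> /eqP /(J_pair_coef0 J_subspace0 v0).
by case=> -> ->.
Qed.

Lemma Jline_br0 u : br u (u *m J) = 0 ->
  forall p q, Jline u p -> Jline u q -> br p q = 0.
Proof.
move=> uu _ _ [a [b ->]] [c [d ->]].
by rewrite !(brDl, brDr, brZl, brZr) brJJ brJl brxx uu oppr0 !(scaler0, addr0).
Qed.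

Lemma exists_unit_commuting_J S w : J_subspace S ->
  (forall p q, S p -> S q -> br p q = 0) -> (forall p, S p -> br w p = p) ->
  S (br w (w *m J)) -> exists f, (forall p, S p -> br f p = p) /\ br f (f *m J) = 0.
Proof.
move=> [_ _ SJ] abelS wid Sk; set k := br w (w *m J) in Sk *.
exists (w + 2^-1 *: (k *m J)); split.
  by move=> p Sp; rewrite brDl brZl (abelS _ _ (SJ _ Sk) Sp) scaler0 addr0 wid.
rewrite mulmxDl -scalemxAl mulmxJJ !(brDl, brDr, brZl, brZr, brNr) brJJ (brC k w).
rewrite (wid _ Sk) (abelS _ _ (SJ _ Sk) Sk).
by apply/rowP => i; rewrite !mxE /k; lra.
Qed.

Lemma br_Jline_complex u x : u != 0 -> br u (u *m J) = 0 ->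
  (forall a b, Jline u (br a b)) ->
  exists d1 d2, forall p, Jline u p -> br x p = d1 *: p + d2 *: (p *m J).
Proof.
move=> /eqP u0 uu der_in.
have [d1 [d2 xu]] := der_in x u; have [e1 [e2 xuJ]] := der_in x (u *m J).
have coef0 a b : a *: u + b *: (u *m J) = 0 -> a = 0 /\ b = 0.
  exact: J_pair_coef0 J_subspace0 u0.
have xxJ_u := Jline_br0 uu (der_in x (x *m J)) (Jline_self u).
have [_ _ UJ] := J_subspace_Jline u.
have xxJ_uJ := Jline_br0 uu (der_in x (x *m J)) (UJ _ (Jline_self u)).
have jac_u := jacobi x (x *m J) u; have jac_uJ := jacobi x (x *m J) (u *m J).
rewrite {}xxJ_u add0r brJl xuJ xu !(brNr, brDr, brZr) brJJ brJl xu xuJ in jac_u.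
rewrite {}xxJ_uJ add0r brJJ xu xuJ !(brNr, brDr, brZr) brJl brJJ xu xuJ in jac_uJ.
move/eqP: jac_u; rewrite -subr_eq0 => /eqP jac_u.
move/eqP: jac_uJ; rewrite -subr_eq0 => /eqP jac_uJ.
have [_ h1] : - (d1 * d2 + e1 * e2) = 0 /\ - (e2 ^+ 2 + d2 ^+ 2 + e1 * d2 - d1 * e2) = 0.
  by apply: coef0; rewrite -jac_u; vec_ring.
have [h2 _] : d1 ^+ 2 + d2 * e1 + e1 ^+ 2 - e2 * d1 = 0 /\ d1 * d2 + e1 * e2 = 0.
  by apply: coef0; rewrite -jac_uJ; vec_ring.
(* the uJ-coefficient of the first Jacobi identity plus the u-coefficient of
   the second one *)
have sq : (d1 - e2) ^+ 2 + (d2 + e1) ^+ 2 = 0.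
  by rewrite -[RHS]subr0 -{1}h2 -h1; ring.
move/eqP: sq; rewrite paddr_eq0 ?sqr_ge0 // !sqrf_eq0 subr_eq0 addrC addr_eq0.
move=> /andP[/eqP e2E /eqP e1E].
exists d1, d2 => _ [a [b ->]].
by rewrite brDr !brZr xu xuJ e1E -e2E mulmxDl -!scalemxAl mulmxJJ; vec_ring.
Qed.
End AbelianComplexStructure.
End LieAlgebra.

(** * Dimension four *)

Lemma free4_span (R : fieldType) (b0 b1 b2 b3 : 'rV[R]_4) :
  (forall c0 c1 c2 c3, c0 *: b0 + c1 *: b1 + c2 *: b2 + c3 *: b3 = 0 ->
     [/\ c0 = 0, c1 = 0, c2 = 0 & c3 = 0]) ->
  forall t, exists c0 c1 c2 c3, t = c0 *: b0 + c1 *: b1 + c2 *: b2 + c3 *: b3.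
Proof.
pose B : 'M[R]_4 := \matrix_(i < 4) [:: b0; b1; b2; b3]`_i.
have BE c : c *m B = c 0 ord0 *: b0 + c 0 (lift ord0 ord0) *: b1 +
    c 0 (lift ord0 (lift ord0 ord0)) *: b2 + c 0 (lift ord0 (lift ord0 (lift ord0 ord0))) *: b3.
  by rewrite mulmx_sum_row !big_ord_recl big_ord0 !rowK !addrA addr0.
move=> free t.
have /submxP[D ->] : (t <= B)%MS.
  apply/submx_full; rewrite row_full_unit -row_free_unit; apply/inj_row_free => c.
  rewrite BE => /free[c0 c1 c2 c3]; apply/rowP => -[[|[|[|[|i]]]] Hi] //; rewrite mxE;
    [rewrite -c0 | rewrite -c1 | rewrite -c2 | rewrite -c3]; congr (c 0 _); exact: val_inj.
by rewrite BE; do 4 eexists.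
Qed.

Lemma exists_notin_span2 (R : fieldType) n (a b : 'rV[R]_n) : (2 < n)%N ->
  exists x, ~ exists c d, x = c *: a + d *: b.
Proof.
move=> n_gt2; apply/existsNP => span_all.
have : (1%:M <= col_mx a b)%MS.
  apply/row_subP => i; have [c [d ->]] := span_all (row i 1%:M).
  by apply/submxP; exists (row_mx c%:M d%:M); rewrite mul_row_col !mul_scalar_mx.
move/mxrankS; rewrite mxrank1 => /leq_trans/(_ (rank_leq_row _)).
by rewrite leqNgt n_gt2.
Qed.

Lemma mul_rV1 (R : pzRingType) n (a : 'rV[R]_1) (x : 'rV[R]_n) : a *m x = a 0 0 *: x.
Proof. by rewrite {1}[a]mx11_scalar mul_scalar_mx. Qed.

Lemma mul_rV2_col_mx (R : pzRingType) n (a : 'rV[R]_(1 + 1)) (x y : 'rV[R]_n) :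
  a *m col_mx x y = lsubmx a 0 0 *: x + rsubmx a 0 0 *: y.
Proof. by rewrite -{1}[a]hsubmxK mul_row_col !mul_rV1. Qed.

Lemma rV2_eq0 (R : pzRingType) (a : 'rV[R]_(1 + 1)) :
  lsubmx a 0 0 = 0 -> rsubmx a 0 0 = 0 -> a = 0.
Proof.
move=> l0 r0; rewrite -[a]hsubmxK [lsubmx a]mx11_scalar [rsubmx a]mx11_scalar l0 r0.
by rewrite raddf0 row_mx0.
Qed.

Section Dimension4.
Variables (R : realType) (br : 'rV[R]_4 -> 'rV[R]_4 -> 'rV[R]_4) (J : 'M[R]_4).
Hypotheses (Hl : is_lie_bracket br) (HJ : abelian_complex_structure br J).
Local Notation V := 'rV[R]_4.
Local Notation central := (lie_center br).

Lemma Jbasis_span S v w : J_subspace J S -> S v -> v != 0 -> ~ S w ->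
  forall t, exists c0 c1 c2 c3, t = c0 *: v + c1 *: (v *m J) + c2 *: w + c3 *: (w *m J).
Proof.
by move=> HS Sv v0 Sw; apply: free4_span => c0 c1 c2 c3; exact: (Jbasis_free HJ HS Sv v0 Sw).
Qed.

Lemma central_Jbasis S v w t : J_subspace J S -> S v -> v != 0 -> ~ S w ->
  br t v = 0 -> br t (v *m J) = 0 -> br t w = 0 -> br t (w *m J) = 0 -> central t.
Proof.
move=> HS Sv v0 Sw t0 t1 t2 t3 y.
have [c0 [c1 [c2 [c3 ->]]]] := Jbasis_span HS Sv v0 Sw y.
by rewrite !(brDr Hl, brZr Hl) t0 t1 t2 t3 !(scaler0, addr0).
Qed.

Lemma aff_abelian : (forall x y, br x y = 0) -> quotient_by_center_is_aff br.
Proof.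
move=> ab; apply: (aff_decomposition_J Hl HJ (E := 0 : 'M_(0, 4))).
- by move=> x; exists 0, 0 => y; apply: ab.
- by move=> a b _; split; apply: thinmx0.
- by move=> a b; apply: ab.
- by move=> x y; exists 0 => z; apply: ab.
Qed.

Section CenterNonzero.
Variable c : V.
Hypotheses (c0 : c != 0) (cc : central c).

Lemma span_mod_center y : ~ central y ->
  forall t, exists a b, central (t - (a *: (y *m J) + b *: y)).
Proof.
move=> cy t; have [c1 [c2 [a [b ->]]]] := Jbasis_span (J_subspace_center Hl HJ) cc c0 cy t.
exists b, a; have -> : c1 *: c + c2 *: (c *m J) + a *: y + b *: (y *m J) -
    (b *: (y *m J) + a *: y) = c1 *: c + c2 *: (c *m J) by vec_ring.
by apply: (centerD Hl); apply: (centerZ Hl) => //; apply: (centerJ Hl HJ).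
Qed.

Lemma exists_stable_line x : ~ central x ->
  exists y, ~ central y /\ exists mu, central (br y (y *m J) - mu *: y).
Proof.
move=> cx; have [cK | ncK] := pselect (central (br x (x *m J))).
  by exists x; split => //; exists 0; rewrite scale0r subr0.
exists (br x (x *m J)); split => //.
have [p [q cKp]] := span_mod_center cx (br x (x *m J)).
have cKJ : central (br x (x *m J) *m J - (p *: (x *m J) + q *: x) *m J).
  by rewrite -mulmxBl; apply: (centerJ Hl HJ).
exists (p ^+ 2 + q ^+ 2); rewrite (br_mod_center Hl cKp cKJ) mulmxDl -!scalemxAl (mulmxJJ HJ).
rewrite !(brDl Hl, brDr Hl, brZl Hl, brZr Hl, brNr Hl) !(brJJ HJ) !(brJl Hl HJ) !(brxx Hl).
by apply: (center_subr_eq Hl); vec_ring.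
Qed.

Lemma aff_center_nonzero x : ~ central x -> quotient_by_center_is_aff br.
Proof.
move=> /exists_stable_line[y [cy [mu ymu]]].
apply: (aff_decomposition_J Hl HJ (E := y)).
- move=> t; have [a [b ct]] := span_mod_center cy t.
  by exists a%:M, b%:M; rewrite !mul_scalar_mx.
- move=> a b; rewrite !mul_rV1 addrC => /(J_pair_coef0 HJ (J_subspace_center Hl HJ) cy)[a0 b0].
  by split; rewrite [LHS]mx11_scalar ?a0 ?b0 raddf0.
- by move=> a b; rewrite !mul_rV1 (brZl Hl) (brZr Hl) (brxx Hl) !scaler0.
- move=> s t; have [s1 [s2 cs]] := span_mod_center cy s.
  have [t1 [t2 ct]] := span_mod_center cy t.
  exists ((s2 * t1 - s1 * t2) * mu)%:M; rewrite mul_scalar_mx (br_mod_center Hl cs ct).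
  have -> : br (s1 *: (y *m J) + s2 *: y) (t1 *: (y *m J) + t2 *: y) -
      ((s2 * t1 - s1 * t2) * mu) *: y = (s2 * t1 - s1 * t2) *: (br y (y *m J) - mu *: y).
    rewrite !(brDl Hl, brDr Hl, brZl Hl, brZr Hl) (brJJ HJ) (brJl Hl HJ) !(brxx Hl).
    by vec_ring.
  exact: (centerZ Hl).
Qed.

End CenterNonzero.

Section Centerless.
Hypothesis centerless : forall t, central t -> t = 0.

Lemma aff_derived_not_in_Jline u v : u != 0 -> ~ Jline J u v -> br u v = 0 ->
  (forall x y, br (br x y) u = 0) -> (forall x y, br (br x y) v = 0) ->
  quotient_by_center_is_aff br.
Proof.
move=> u0 v_out uv der_u der_v.
have HS := J_subspace_Jline HJ u; have Su := Jline_self J u.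
have span := Jbasis_span HS Su u0 v_out.
have vu : br v u = 0 by rewrite (brC Hl) uv oppr0.
apply: (aff_decomposition_J Hl HJ (E := col_mx u v)); rewrite ?mul_col_mx.
- move=> t; have [c0 [c1 [c2 [c3 ->]]]] := span t.
  exists (row_mx c1%:M c3%:M), (row_mx c0%:M c2%:M).
  by rewrite !mul_row_col !mul_scalar_mx; apply: (center_subr_eq Hl); vec_ring.
- move=> a b /centerless; rewrite !mul_rV2_col_mx => e.
  have [] := Jbasis_free HJ HS Su u0 v_out (c0 := lsubmx b 0 0) (c1 := lsubmx a 0 0)
    (c2 := rsubmx b 0 0) (c3 := rsubmx a 0 0).
    by rewrite -e; vec_ring.
  by move=> b0 a0 b1 a1; split; apply: rV2_eq0.
- move=> a b; rewrite !mul_rV2_col_mx !(brDl Hl, brDr Hl, brZl Hl, brZr Hl) uv vu.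
  by rewrite !(brxx Hl) !(scaler0, addr0).
- move=> x y; have [c0 [c1 [c2 [c3 e]]]] := span (br x y).
  exists (row_mx c0%:M c2%:M); rewrite mul_row_col !mul_scalar_mx.
  have re : br x y - (c0 *: u + c2 *: v) = c1 *: (u *m J) + c3 *: (v *m J).
    by rewrite e; vec_ring.
  apply: (central_Jbasis HS Su u0 v_out).
  + by rewrite (brBl Hl) der_u (brDl Hl) !(brZl Hl) (brxx Hl) vu !scaler0 addr0 subr0.
  + by rewrite re (brDl Hl) !(brZl Hl) !(brJJ HJ) (brxx Hl) vu !scaler0 addr0.
  + by rewrite (brBl Hl) der_v (brDl Hl) !(brZl Hl) (brxx Hl) uv !scaler0 addr0 subr0.
  + by rewrite re (brDl Hl) !(brZl Hl) !(brJJ HJ) (brxx Hl) uv !scaler0 addr0.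
Qed.

Section DerivedInJline.
Variables u x : V.
Hypotheses (u0 : u != 0) (der_in : forall a b, Jline J u (br a b)) (x_out : ~ Jline J u x).

(* Otherwise every bracket is a multiple of u, and the Jacobi identity for
   (uJ, x, xJ) makes the vector k below central. *)
Lemma centerless_Jline_abelian : (forall a b, br u (br a b) = 0) -> br u (u *m J) = 0.
Proof.
move=> der_u; have [//|uuJ0] := eqVneq (br u (u *m J)) 0; exfalso.
have HS := J_subspace_Jline HJ u; have Su := Jline_self J u.
have on_u a b : exists r, br a b = r *: u.
  have [w1 [w2 e]] := der_in a b; exists w1.
  have := der_u a b; rewrite e (brDr Hl) !(brZr Hl) (brxx Hl) scaler0 add0r => /eqP.
  by rewrite scaler_eq0 (negbTE uuJ0) orbF => /eqP ->; rewrite scale0r addr0.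
have [p uuJ] := on_u u (u *m J); have [q xxJ] := on_u x (x *m J).
have [r ux] := on_u u x; have [s uxJ] := on_u u (x *m J).
have p0 : p != 0 by apply: contra_neq uuJ0 => p0; rewrite uuJ p0 scale0r.
have pq : p * q = r ^+ 2 + s ^+ 2.
  have := jacobi Hl (u *m J) x (x *m J).
  rewrite xxJ !(brZr Hl) !(brJJ HJ) !(brJl Hl HJ) (brNl Hl) uuJ uxJ ux (brZl Hl) (brZr Hl).
  rewrite uxJ (brC Hl x u) ux => /eqP; rewrite -subr_eq0 => /eqP jac.
  have : (p * q - r ^+ 2 - s ^+ 2) *: u = 0 by rewrite -oppr0 -jac; vec_ring.
  by move/eqP; rewrite scaler_eq0 (negbTE u0) orbF subr_eq0 subr_eq => /eqP ->; ring.
pose k := (- s) *: u + (- r) *: (u *m J) + p *: x.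
have ck : central k.
  apply: (central_Jbasis HS Su u0 x_out); rewrite /k !(brDl Hl, brZl Hl);
  rewrite ?(brJJ HJ) ?(brJl Hl HJ) ?(brJr Hl HJ x u) ?(brC Hl x u) ?(brxx Hl);
  by rewrite ?uuJ ?xxJ ?ux ?uxJ ?scalerN ?scalerA ?pq; vec_ring.
have k0 : (- s) *: u + (- r) *: (u *m J) + p *: x + 0 *: (x *m J) = 0.
  by rewrite scale0r addr0; exact: centerless ck.
have [_ _ p0' _] := Jbasis_free HJ HS Su u0 x_out k0.
by rewrite p0' eqxx in p0.
Qed.

Hypothesis uuJ : br u (u *m J) = 0.

(* [x, .] acts on the line as multiplication by the complex number d1 + i d2,
   so w below acts as the identity. *)
Lemma exists_Jline_unit :
  exists f, (forall p, Jline J u p -> br f p = p) /\ br f (f *m J) = 0.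
Proof.
have HS := J_subspace_Jline HJ u; have Su := Jline_self J u; have [_ _ UJ] := HS.
have [d1 [d2 adx]] := br_Jline_complex Hl HJ x u0 uuJ der_in.
have L0 : d1 ^+ 2 + d2 ^+ 2 != 0.
  apply/eqP => /eqP; rewrite paddr_eq0 ?sqr_ge0 // !sqrf_eq0 => /andP[/eqP d10 /eqP d20].
  have adx0 p : Jline J u p -> br x p = 0.
    by move=> Up; rewrite adx // d10 d20 !scale0r addr0.
  apply: (negP u0); apply/eqP/centerless/(central_Jbasis HS Su u0 x_out).
  - exact: (brxx Hl).
  - exact: uuJ.
  - by rewrite (brC Hl) adx0 ?oppr0.
  - by rewrite -(brJr Hl HJ) adx0 //; apply: UJ.
pose L := d1 ^+ 2 + d2 ^+ 2; pose w := (d1 / L) *: x + (d2 / L) *: (x *m J).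
apply: (exists_unit_commuting_J Hl HJ HS (Jline_br0 Hl HJ uuJ) (w := w) _ (der_in _ _)).
move=> p Up; rewrite (brDl Hl) !(brZl Hl) (brJl Hl HJ) !adx //; last exact: UJ.
by rewrite (mulmxJJ HJ); apply/rowP => i; rewrite !mxE /L; field.
Qed.

Lemma aff_derived_in_abelian_Jline : quotient_by_center_is_aff br.
Proof.
have HS := J_subspace_Jline HJ u; have Su := Jline_self J u; have [_ _ UJ] := HS.
have [f [adf ffJ]] := exists_Jline_unit.
have f_out : ~ Jline J u f.
  by move=> Uf; apply: (negP u0); apply/eqP; rewrite -(adf u Su) (Jline_br0 Hl HJ uuJ).
pose E := col_mx u (u *m J); pose F := col_mx f (- (f *m J)).
have UE c : Jline J u (c *m E) by rewrite mul_rV2_col_mx; do 2 eexists.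
have adF c p : Jline J u p -> br (c *m F) p = lsubmx c 0 0 *: p + rsubmx c 0 0 *: (p *m J).
  move=> Up; rewrite mul_rV2_col_mx (brDl Hl) !(brZl Hl) (brNl Hl) (brJl Hl HJ) opprK.
  by rewrite !adf //; apply: UJ.
apply: (aff_decomposition Hl (E := E) (F := F)).
- move=> t; have [c0 [c1 [c2 [c3 ->]]]] := Jbasis_span HS Su u0 f_out t.
  exists (row_mx c2%:M (- c3)%:M), (row_mx c0%:M c1%:M).
  by rewrite !mul_row_col !mul_scalar_mx; apply: (center_subr_eq Hl); vec_ring.
- move=> a b /centerless; rewrite !mul_rV2_col_mx => e.
  have [] := Jbasis_free HJ HS Su u0 f_out (c0 := lsubmx b 0 0) (c1 := rsubmx b 0 0)
    (c2 := lsubmx a 0 0) (c3 := - rsubmx a 0 0).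
    by rewrite -e; vec_ring.
  move=> b0 b1 a0 /eqP; rewrite oppr_eq0 => /eqP a1.
  by split; apply: rV2_eq0.
- by move=> a b; apply: (Jline_br0 Hl HJ uuJ).
- move=> a b; rewrite !mul_rV2_col_mx !(brDl Hl, brDr Hl, brZl Hl, brZr Hl, brNl Hl, brNr Hl).
  by rewrite !(brJJ HJ) !(brJl Hl HJ) ffJ !(brxx Hl) !(scaler0, oppr0, addr0).
- move=> a b; rewrite !adF // !mul_rV2_col_mx !mulmxDl -!scalemxAl !(mulmxJJ HJ).
  by vec_ring.
- move=> y z; have [c0 [c1 e]] := der_in y z.
  exists (row_mx c0%:M c1%:M); rewrite mul_row_col !mul_scalar_mx -e.
  exact: (center_subr_eq Hl).
Qed.

End DerivedInJline.
End Centerless.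

Theorem aff_quotient_by_center : quotient_by_center_is_aff br.
Proof.
have [ab | /existsNP[x0 /existsNP[y0 /eqP u0]]] := pselect (forall x y, br x y = 0).
  exact: aff_abelian.
have [[c [c0 cc]] | nocenter] := pselect (exists c, c != 0 /\ central c).
  by apply: (aff_center_nonzero c0 cc (x := x0)) => cx0; rewrite cx0 eqxx in u0.
have centerless t : central t -> t = 0.
  by move=> ct; apply: contra_notP nocenter => /eqP t0; exists t.
have der_u x y : br (br x y) (br x0 y0) = 0 := derived_abelian Hl HJ x y x0 y0.
have [[a [b v_out]] | in_Jline] := pselect (exists a b, ~ Jline J (br x0 y0) (br a b)).
  exact: (aff_derived_not_in_Jline centerless u0 v_out (derived_abelian Hl HJ x0 y0 a b)
    der_u (fun x y => derived_abelian Hl HJ x y a b)).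
have der_in a b : Jline J (br x0 y0) (br a b).
  by apply: contra_notP in_Jline => ?; exists a, b.
have [x x_out] := exists_notin_span2 (br x0 y0) (br x0 y0 *m J) (isT : (2 < 4)%N).
apply: (aff_derived_in_abelian_Jline centerless u0 der_in x_out).
exact: (centerless_Jline_abelian centerless u0 der_in x_out (derived_abelian Hl HJ x0 y0)).
Qed.

End Dimension4.

Theorem mainTheorem11 (R : realType) (br : 'rV[R]_4 -> 'rV[R]_4 -> 'rV[R]_4) :
  is_lie_bracket br ->
  (exists J : 'M[R]_4, abelian_complex_structure br J) ->
  exists (m : nat) (mul : 'rV[R]_m -> 'rV[R]_m -> 'rV[R]_m),
    comm_assoc_algebra mul /\ quotient_by_center_iso_aff br mul.
Proof. by move=> Hl [J HJ]; exact: aff_quotient_by_center Hl HJ. Qed.
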